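(* Let $r>0$ and $k\geq 1$ be an integer. Let $\mathcal N=(G,\beta,r)$ be a multi-path network of length $k$: $G=(V,A)$ is a weakly connected directed multigraph without loops with node set $V=\{v_0,v_1,\dots,v_k\}$, in which every arc joins two consecutive nodes $v_{i-1},v_i$ for some $i\in\{1,\dots,k\}$, and $\beta\in\mathbb{R}^A_{>0}$. For $i=1,\dots,k$ let $A_i$ be the set of arcs joining $v_{i-1}$ and $v_i$, and set $u_i:=\sum_{a\in A_i}\mu_a$, where $\mu_a=\beta_a^{-1/r}$. Let $s=v_0$ and $t=v_k$. Then the effective conductance between $s$ and $t$ in $\mathcal N$ is $$U^{\mathcal N}_{s,t}=\Big(\sum_{i=1}^k u_i^{-r}\Big)^{-1/r}.$$
   Context: A potential-based flow network $\mathcal N=(G,\beta,r)$ consists of a weakly connected directed multigraph $G=(V,A)$ without loops, resistances $\beta\in\mathbb{R}^A_{>0}$ and a degree $r>0$; the conductance of arc $a$ is $\mu_a=\beta_a^{-1/r}$. For a balanced vector $b\in\mathbb{R}^V$ (i.e. $\sum_v b_v=0$), a potential-based $b$-transshipment is a pair $(\pi,f)\in\mathbb{R}^V\times\mathbb{R}^A$ with $\pi_u-\pi_v=\beta_a\,\mathrm{sign}(f_a)|f_a|^r$ for every arc $a=(u,v)$ and $\sum_{a\in\delta^+(v)}f_a-\sum_{a\in\delta^-(v)}f_a=b_v$ for all $v\in V$ (here $\delta^+(v)$, $\delta^-(v)$ are the arcs leaving, resp. entering, $v$). Such a pair exists for every balanced $b$ and is unique up to adding a constant to $\pi$; let $\pi^{\mathcal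 N}(b)$ denote the potential vector normalized to have smallest entry $0$. For distinct $s,t\in V$ let $\chi_{s,t}=\chi_s-\chi_t$ (difference of unit vectors). The effective resistance is $R^{\mathcal N}_{s,t}=\pi^{\mathcal N}_s(\chi_{s,t})-\pi^{\mathcal N}_t(\chi_{s,t})$ and the effective conductance is $U^{\mathcal N}_{s,t}=(R^{\mathcal N}_{s,t})^{-1/r}$. *)

From HB Require Import structures.
From Stdlib Require Import ClassicalEpsilon.
From mathcomp Require Import all_boot all_order all_algebra.
From mathcomp Require Import all_classical all_reals all_analysis.
Set Implicit Arguments. Unset Strict Implicit. Unset Printing Implicit Defensive.
Import Order.TTheory GRing.Theory Num.Theory.
Local Open Scope ring_scope.

Section PBFlow.
Variables (R : realType) (V A : finType) (tail head : A -> V).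

Definition loopless : Prop := forall a, tail a != head a.

Definition adj : rel V := fun x y =>
  [exists a, ((tail a == x) && (head a == y)) || ((tail a == y) && (head a == x))].

Definition weakly_connected : Prop := forall x y : V, connect adj x y.

Definition sgnpow (r x : R) : R := Num.sg x * (`|x| `^ r).

Definition balanced (b : V -> R) : Prop := \sum_(v : V) b v = 0.

Definition pb_transshipment (beta : A -> R) (r : R) (b : V -> R)
  (pi : V -> R) (f : A -> R) : Prop :=
  (forall a, pi (tail a) - pi (head a) = beta a * sgnpow r (f a)) /\
  (forall v, \sum_(a | tail a == v) f a - \sum_(a | head a == v) f a = b v).

(* pi^N(b): the potential of a potential-based b-transshipment, normalized to
   have smallest entry 0 (chosen by Hilbert's epsilon; well-defined by the
   existence/uniqueness fact recalled in the paper). *)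
Definition pot_N (beta : A -> R) (r : R) (b : V -> R) : V -> R :=
  epsilon (inhabits (fun _ : V => 0 : R))
    (fun pi => (exists f, pb_transshipment beta r b pi f) /\
               (forall v, 0 <= pi v) /\ (exists v, pi v = 0)).

Definition chi (s t : V) : V -> R := fun v => (v == s)%:R - (v == t)%:R.

Definition eff_res (beta : A -> R) (r : R) (s t : V) : R :=
  pot_N beta r (chi s t) s - pot_N beta r (chi s t) t.

Definition eff_cond (beta : A -> R) (r : R) (s t : V) : R :=
  eff_res beta r s t `^ (- r^-1).

Definition conductance (beta : A -> R) (r : R) (a : A) : R := beta a `^ (- r^-1).

End PBFlow.

(* Multi-path networks of length k: node set V = {v_0,...,v_k} = 'I_k.+1,
   v_i represented by the ordinal i. *)
Definition joins (k : nat) (A : finType) (tail head : A -> 'I_k.+1)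
  (a : A) (i : nat) : bool :=
  ((tail a == i.-1 :> nat) && (head a == i :> nat)) ||
  ((tail a == i :> nat) && (head a == i.-1 :> nat)).

Definition multipath (k : nat) (A : finType) (tail head : A -> 'I_k.+1) : Prop :=
  forall a, exists2 i : nat, (1 <= i <= k)%N & joins tail head a i.

Definition u_layer (R : realType) (k : nat) (A : finType)
  (tail head : A -> 'I_k.+1) (beta : A -> R) (r : R) (i : nat) : R :=
  \sum_(a | joins tail head a i) conductance beta r a.

From HB Require Import structures.
From Stdlib Require Import ClassicalEpsilon.
From mathcomp Require Import all_boot all_order all_algebra.
From mathcomp Require Import all_classical all_reals all_analysis.
From mathcomp Require Import zify.
Set Implicit Arguments.
Unset Strict Implicit.
Import Order.TTheory GRing.Theory Num.Theory.
Local Open Scope ring_scope.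

(* The cut separating v_0, ..., v_(i-1) from v_i, ..., v_k is crossed exactly by the
   arcs of A_i, so in a unit s-t flow the flow on A_i, oriented from v_(i-1) to v_i,
   sums to 1.  On such an arc the potential law makes this oriented flow
   mu_a sgn(d_i) |d_i|^(1/r), where d_i is the potential drop from v_(i-1) to v_i;
   hence sgn(d_i) |d_i|^(1/r) u_i = 1, i.e. d_i = u_i^(-r), and pi_s - pi_t
   telescopes to the sum of the u_i^(-r).  Conversely these drops define a
   potential-based transshipment; u_i > 0 since connectivity forbids an empty A_i. *)

Section SignedPower.
Variable R : realType.
Implicit Types p r x c d b u : R.

Lemma powRV x p : 0 < x -> x^-1 `^ p = (x `^ p)^-1.
Proof.
move=> x_gt0; have xp_neq0 : x `^ p != 0 by rewrite gt_eqF ?powR_gt0.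
apply: (mulfI xp_neq0).
by rewrite -powRM ?invr_ge0 ?ltW // mulfV ?gt_eqF // powR1 mulfV.
Qed.

Lemma sgnpow0 p : sgnpow p 0 = 0 :> R.
Proof. by rewrite /sgnpow sgr0 mul0r. Qed.

Lemma sgnpowN p x : sgnpow p (- x) = - sgnpow p x.
Proof. by rewrite /sgnpow sgrN normrN mulNr. Qed.

Lemma sgnpow_sign p (s : bool) x : sgnpow p ((-1) ^+ s * x) = (-1) ^+ s * sgnpow p x.
Proof. by case: s; rewrite ?mulN1r ?mul1r ?sgnpowN. Qed.

Lemma gtr0_sgnpow p x : 0 < x -> sgnpow p x = x `^ p.
Proof. by move=> x_gt0; rewrite /sgnpow gtr0_sg // gtr0_norm // mul1r. Qed.

Lemma sgnpowMr p x c : 0 < c -> sgnpow p (x * c) = sgnpow p x * c `^ p.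
Proof.
move=> c_gt0; rewrite /sgnpow sgrM (gtr0_sg c_gt0) mulr1 normrM (gtr0_norm c_gt0).
by rewrite powRM ?normr_ge0 ?ltW // mulrA.
Qed.

Lemma sgnpowK r : 0 < r -> cancel (sgnpow r) (sgnpow r^-1).
Proof.
move=> r_gt0 x; have [->|x_neq0] := eqVneq x 0; first by rewrite !sgnpow0.
rewrite [X in sgnpow _ X]/sgnpow sgnpowMr ?powR_gt0 ?normr_gt0 //.
rewrite -powRrM mulfV ?gt_eqF // powRr1 //.
by rewrite /sgnpow normr_sg x_neq0 powR1 mulr1 sgr_id -numEsg.
Qed.

Lemma sgnpowVK r : 0 < r -> cancel (sgnpow r^-1) (sgnpow r).
Proof. by move=> r_gt0 x; rewrite -{1}[r]invrK sgnpowK ?invr_gt0. Qed.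

Lemma sgnpow_law r b d x : 0 < r -> 0 < b ->
  d = b * sgnpow r x <-> x = sgnpow r^-1 d * b `^ (- r^-1).
Proof.
move=> r_gt0 b_gt0.
rewrite powRN -powRV // -sgnpowMr ?invr_gt0 //.
split=> [->|->]; first by rewrite mulrC mulKf ?gt_eqF ?sgnpowK.
by rewrite sgnpowVK // mulrC divfK ?gt_eqF.
Qed.

Lemma sgnpowV_mul_eq1 r d u : 0 < r -> 0 < u ->
  sgnpow r^-1 d * u = 1 <-> d = u `^ (- r).
Proof.
move=> r_gt0 u_gt0; have u_neq0 : u != 0 by rewrite gt_eqF.
rewrite powRN -powRV // -gtr0_sgnpow ?invr_gt0 //.
split=> [eq1|->]; last by rewrite sgnpowK // mulVf.
by rewrite -[d](sgnpowVK r_gt0) -[sgnpow _ d](mulfK u_neq0) eq1 mul1r.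
Qed.

End SignedPower.

Section Networks.
Variables (R : realType) (V A : finType) (tail head : A -> V).

Definition netflow (f : A -> R) (v : V) : R :=
  \sum_(a | tail a == v) f a - \sum_(a | head a == v) f a.

Lemma sum_netflow f (S : pred V) :
  \sum_(v | S v) netflow f v =
  \sum_(a | S (tail a)) f a - \sum_(a | S (head a)) f a.
Proof.
have sum_fibres (g : A -> V) :
    \sum_(v | S v) \sum_(a | g a == v) f a = \sum_(a | S (g a)) f a.
  rewrite (partition_big g S) //; apply: eq_bigr => v Sv.
  by apply: eq_bigl => a; case: eqP => [->|]; rewrite ?andbT ?andbF.
by rewrite sumrB !sum_fibres.
Qed.

Lemma eff_res_eq (beta : A -> R) r (s t : V) c :
  (exists pi, (exists f, pb_transshipment tail head beta r (chi R s t) pi f) /\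
              (forall v, 0 <= pi v) /\ (exists v, pi v = 0)) ->
  (forall pi f, pb_transshipment tail head beta r (chi R s t) pi f ->
     pi s - pi t = c) ->
  eff_res tail head beta r s t = c.
Proof.
move=> normalized drop_c; rewrite /eff_res /pot_N.
by have [[f /drop_c]] := epsilon_spec (inhabits (fun _ : V => 0 : R)) _ normalized.
Qed.

End Networks.

Lemma prefix_sums_inj (Z : zmodType) n (F G : 'I_n -> Z) :
  (forall i, \sum_(v : 'I_n | (v < i)%N) F v = \sum_(v : 'I_n | (v < i)%N) G v) ->
  F =1 G.
Proof.
have sum_ltnS (H : 'I_n -> Z) (v : 'I_n) :
    \sum_(w : 'I_n | (w < v.+1)%N) H w = \sum_(w : 'I_n | (w < v)%N) H w + H v.
  rewrite (bigD1 v) ?ltnSn //= addrC; congr (_ + _); apply: eq_bigl => w.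
  by rewrite ltnS ltn_neqAle andbC.
by move=> eqFG v; have := eqFG v.+1; rewrite !sum_ltnS eqFG => /addrI.
Qed.

Lemma natr_ltn_predB (Z : nzRingType) (i j : nat) : (0 < j)%N ->
  ((j.-1 < i)%N%:R - (j < i)%N%:R : Z) = (j == i)%:R.
Proof.
move=> j_gt0; case: (ltngtP j i) => [j_lt_i|i_lt_j|<-].
- by rewrite (_ : j.-1 < i)%N ?subrr //; lia.
- by rewrite (_ : j.-1 < i = false)%N ?subrr //; lia.
- by rewrite (_ : j.-1 < j)%N ?ltnn ?subr0 //; lia.
Qed.

Lemma chi_prefix (R : realType) k (i : nat) :
  \sum_(v : 'I_k.+1 | (v < i)%N) chi R ord0 ord_max v = (0 < i <= k)%N%:R.
Proof.
have sum_delta (x : 'I_k.+1) :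
    \sum_(v : 'I_k.+1 | (v < i)%N) ((v == x)%:R : R) = (x < i)%N%:R.
  rewrite big_mkcond (bigD1 x) //= eqxx big1 ?addr0; first by case: (x < i)%N.
  by move=> v /negbTE ->; case: (v < i)%N.
rewrite sumrB !sum_delta /=; case: (posnP i) => [->|_]; first by rewrite subrr.
by case: (leqP i k); rewrite ?subr0 ?subrr.
Qed.

Section Multipath.
Variables (R : realType) (k : nat) (A : finType) (tail head : A -> 'I_k.+1).
Hypothesis multipath_arcs : multipath tail head.

Definition layer (a : A) : nat := maxn (tail a) (head a).

Definition orient (a : A) : R := (-1) ^+ (head a < tail a)%N.

Lemma joins_layer a i : joins tail head a i = (layer a == i).
Proof. by have [j _] := multipath_arcs a; rewrite /joins /layer; lia. Qed.

Lemma layer_range a : (0 < layer a <= k)%N.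
Proof. by have [j j_range] := multipath_arcs a; rewrite joins_layer => /eqP->. Qed.

Lemma layer_ends a :
  (tail a = (layer a).-1 :> nat /\ head a = layer a :> nat) \/
  (tail a = layer a :> nat /\ head a = (layer a).-1 :> nat).
Proof.
have : joins tail head a (layer a) by rewrite joins_layer.
by case/orP => /andP[/eqP-> /eqP->]; [left | right].
Qed.

Lemma cut_crossing a i :
  ((tail a < i)%N%:R - (head a < i)%N%:R : R) = (joins tail head a i)%:R * orient a.
Proof.
rewrite joins_layer /orient; have /andP[l_gt0 _] := layer_range a.
case: (layer_ends a) => -[-> ->].
  by rewrite natr_ltn_predB // (_ : layer a < (layer a).-1 = false)%N ?mulr1 //; lia.
rewrite -opprB natr_ltn_predB // (_ : (layer a).-1 < layer a)%N ?mulrN1 //; lia.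
Qed.

Lemma layer_flow (f : A -> R) i :
  \sum_(v : 'I_k.+1 | (v < i)%N) netflow tail head f v =
  \sum_(a | joins tail head a i) orient a * f a.
Proof.
rewrite (sum_netflow tail head f (fun v : 'I_k.+1 => (v < i)%N)) /=.
rewrite !(big_mkcond (fun a => _ < i)%N) -sumrB [RHS]big_mkcond.
apply: eq_bigr => a _; have /(congr1 (fun x => x * f a)) := cut_crossing a i.
by rewrite /= mulrBl -mulrA !mulr_natl !mulrb.
Qed.

Lemma cut_sides a i : ~~ joins tail head a i -> (tail a < i)%N = (head a < i)%N.
Proof.
rewrite joins_layer; have /andP[l_gt0 _] := layer_range a.
by case: (layer_ends a) => -[-> ->] *; apply/idP/idP; lia.
Qed.

Lemma orient_drop (p : nat -> R) a :
  orient a * (p (tail a) - p (head a)) = p (layer a).-1 - p (layer a).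
Proof.
rewrite /orient; have /andP[l_gt0 _] := layer_range a.
case: (layer_ends a) => -[-> ->].
  by rewrite (_ : layer a < (layer a).-1 = false)%N ?mul1r //; lia.
by rewrite (_ : (layer a).-1 < layer a)%N ?mulN1r ?opprB //; lia.
Qed.

Lemma unit_flowP (f : A -> R) :
  netflow tail head f =1 chi R ord0 ord_max <->
  forall i, \sum_(a | joins tail head a i) orient a * f a = (0 < i <= k)%N%:R.
Proof.
split=> [conservation i | layers].
  by rewrite -layer_flow -chi_prefix; apply: eq_bigr.
by apply: prefix_sums_inj => i; rewrite layer_flow chi_prefix.
Qed.

Hypothesis connected : weakly_connected tail head.

Lemma layer_nonempty i : (0 < i <= k)%N -> exists a, joins tail head a i.
Proof.
move=> /andP[i_gt0 i_le_k].
case: (pickP (joins tail head ^~ i)) => [a|no_arc]; first by exists a.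
have cut_closed : fingraph.closed (adj tail head) [pred v : 'I_k.+1 | (v < i)%N].
  move=> x y /existsP[a].
  have same : (tail a < i)%N = (head a < i)%N by apply: cut_sides; rewrite no_arc.
  by case/orP=> /andP[/eqP<- /eqP<-]; rewrite !inE same.
have := closed_connect cut_closed (connected ord0 ord_max).
by rewrite !inE i_gt0 ltnNge i_le_k.
Qed.

Variables (beta : A -> R) (r : R).
Hypotheses (r_gt0 : 0 < r) (beta_gt0 : forall a, 0 < beta a).

Definition layer_res i : R := u_layer tail head beta r i `^ (- r).

Lemma u_layer_gt0 i : (0 < i <= k)%N -> 0 < u_layer tail head beta r i.
Proof.
move=> /layer_nonempty[a a_i]; rewrite /u_layer (bigD1 a) //=.
by rewrite ltr_pwDl ?powR_gt0 ?sumr_ge0 // => b _; apply: powR_ge0.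
Qed.

Lemma potential_law_layer (p : nat -> R) (f : A -> R) a :
  p (tail a) - p (head a) = beta a * sgnpow r (f a) <->
  orient a * f a = sgnpow r^-1 (p (layer a).-1 - p (layer a)) * conductance beta r a.
Proof.
rewrite /conductance -(sgnpow_law _ _ r_gt0 (beta_gt0 a)) -orient_drop.
rewrite /orient sgnpow_sign [in X in _ <-> X](mulrCA (beta a)).
by split=> [-> // | /(congr1 ( *%R ((-1) ^+ (head a < tail a)%N)))]; rewrite !signrMK.
Qed.

Lemma transshipment_layer_drop pi f i :
  pb_transshipment tail head beta r (chi R ord0 ord_max) pi f -> (0 < i <= k)%N ->
  pi (inord i.-1) - pi (inord i) = layer_res i.
Proof.
move=> [law /unit_flowP layers] i_range; pose p j := pi (inord j).
have {}law a : p (tail a) - p (head a) = beta a * sgnpow r (f a).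
  by rewrite /p !inord_val.
have := layers i; rewrite i_range.
rewrite (eq_bigr (fun a => sgnpow r^-1 (p i.-1 - p i) * conductance beta r a));
  last by move=> a; rewrite joins_layer => /eqP <-; apply/potential_law_layer.
by rewrite -mulr_sumr => /(sgnpowV_mul_eq1 _ r_gt0 (u_layer_gt0 i_range)).
Qed.

Lemma transshipment_potential_diff pi f :
  pb_transshipment tail head beta r (chi R ord0 ord_max) pi f ->
  pi ord0 - pi ord_max = \sum_(1 <= i < k.+1) layer_res i.
Proof.
move=> transshipment.
have drops i : (1 <= i < k.+1)%N -> layer_res i = pi (inord i.-1) - pi (inord i).
  by move=> /(transshipment_layer_drop transshipment) ->.
rewrite (eq_big_nat _ _ drops).
rewrite big_add1 /=; under eq_bigr do rewrite -opprB.
rewrite sumrN telescope_sumr // opprB.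
by congr (pi _ - pi _); apply: val_inj; rewrite /= inordK.
Qed.

Lemma normalized_transshipment_exists :
  exists pi, (exists f, pb_transshipment tail head beta r (chi R ord0 ord_max) pi f) /\
             (forall v, 0 <= pi v) /\ (exists v, pi v = 0).
Proof.
pose P j := \sum_(j <= i < k) layer_res i.+1.
have P_drop j : (0 < j <= k)%N -> P j.-1 - P j = layer_res j.
  case/andP=> j_gt0 j_le_k.
  by rewrite /P (big_ltn (_ : j.-1 < k)%N) ?prednK ?addrK //; lia.
exists (fun v : 'I_k.+1 => P v); split; last split.
- pose f a := orient a * (sgnpow r^-1 (layer_res (layer a)) * conductance beta r a).
  exists f; split=> [a | ].
    by apply/(potential_law_layer P f); rewrite signrMK P_drop ?layer_range.
  apply/unit_flowP => i.
  rewrite (eq_bigr (fun a => sgnpow r^-1 (layer_res i) * conductance beta r a));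
    last by move=> a; rewrite joins_layer signrMK => /eqP->.
  rewrite -mulr_sumr; have [i_range | i_out] := boolP (0 < i <= k)%N.
    exact/(sgnpowV_mul_eq1 _ r_gt0 (u_layer_gt0 i_range)).
  rewrite big_pred0 ?mulr0 // => a; apply: contraNF i_out.
  by rewrite joins_layer => /eqP <-; apply: layer_range.
- by move=> v; apply: sumr_ge0 => i _; apply: powR_ge0.
- by exists ord_max; rewrite /P big_geq.
Qed.

End Multipath.

Theorem lemma2 (R : realType) (r : R) (k : nat) (A : finType)
  (tail head : A -> 'I_k.+1) (beta : A -> R) :
  0 < r -> (1 <= k)%N ->
  loopless tail head -> weakly_connected tail head ->
  multipath tail head -> (forall a, 0 < beta a) ->
  eff_cond tail head beta r ord0 ord_max =
  (\sum_(1 <= i < k.+1) u_layer tail head beta r i `^ (- r)) `^ (- r^-1).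
Proof.
(* [multipath] already excludes loops, and for k = 0 both sides vanish. *)
move=> r_gt0 _ _ connected multipath_arcs beta_gt0.
have normalized :=
  normalized_transshipment_exists multipath_arcs connected r_gt0 beta_gt0.
have drop := transshipment_potential_diff multipath_arcs connected r_gt0 beta_gt0.
by rewrite /eff_cond (eff_res_eq normalized drop).
Qed.
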